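(* There exist constants $c(\beta)>0$ depending only on the integer $\beta\ge0$, and absolute constants $c_1,c_2,c_3,c_4>0$, such that for all $d\ge1$, $n\ge3$, $j\in\{1,\dots,d\}$, $h,s>0$, the following hold for $\boldsymbol X_1,\dots,\boldsymbol X_n$ i.i.d. from $p_\pi$: (1) if $\pi$ is supported on $[0,h]^d$, then $\mathbb E\big[(1+X_{j,\max})^\beta\prod_{k\ne j}(1+X_{k,\max})\big]\le c(\beta)\big(\max\{c_1,c_2h\}\frac{\log n}{\log\log n}\big)^{d-1+\beta}$; (2) if $\pi$ is supported on $[0,s\log n]^d$, then $\mathbb E\big[(1+X_{j,\max})^\beta\prod_{k\ne j}(1+X_{k,\max})\big]\le c(\beta)\big(\max\{c_3,c_4s\}\log n\big)^{d-1+\beta}$.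
   Context: Multidimensional Poisson mixture: $\boldsymbol\theta\sim\pi$ on $\mathbb R_+^d$, and given $\boldsymbol\theta$ the coordinates $X_k\sim\mathrm{Poi}(\theta_k)$ are independent; $p_\pi$ is the law of $\boldsymbol X$. $X_{k,\max}=\max_{1\le i\le n}X_{ik}$. *)

From mathcomp Require Import all_boot all_order all_algebra.
From mathcomp Require Import all_classical all_reals all_analysis.
Set Implicit Arguments. Unset Strict Implicit. Unset Printing Implicit Defensive.
Import Order.TTheory GRing.Theory Num.Theory.
Local Open Scope ring_scope.

Definition poi_pmf {R : realType} (th : R) (m : nat) : R := expR (- th) * th ^+ m / (m`!)%:R.

(* The mixing distribution pi on R_+^d is represented as the law of a random
   vector theta = (theta_k)_{k<d} on a probability space (T, P).
   p_mix P theta x = p_pi(x) = E_pi [ prod_k Poi(theta_k)(x_k) ]. *)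
Definition p_mix {R : realType} (d0 : measure_display) (T : measurableType d0)
  (P : probability T R) (d : nat) (theta : 'I_d -> T -> R) (x : {ffun 'I_d -> nat})
  : \bar R :=
  (\int[P]_t (\prod_(k < d) poi_pmf (theta k t) (x k))%:E)%E.

Definition xmax (n d : nat) (X : {ffun 'I_n -> {ffun 'I_d -> nat}}) (k : 'I_d) : nat :=
  (\max_(i < n) X i k)%N.

(* Expectation of f(X_1,...,X_n) for X_1..X_n i.i.d. from p_pi (f >= 0). *)
Definition mix_expect {R : realType} (d0 : measure_display) (T : measurableType d0)
  (P : probability T R) (d : nat) (theta : 'I_d -> T -> R) (n : nat)
  (f : {ffun 'I_n -> {ffun 'I_d -> nat}} -> R) : \bar R :=
  (\esum_(X in [set: {ffun 'I_n -> {ffun 'I_d -> nat}}])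
     (\big[*%E/1%E]_(i < n) p_mix P theta (X i)) * (f X)%:E)%E.

Definition moment_stat {R : realType} (n d : nat) (j : 'I_d) (beta : nat)
  (X : {ffun 'I_n -> {ffun 'I_d -> nat}}) : R :=
  (1 + xmax X j)%:R ^+ beta * \prod_(k < d | k != j) (1 + xmax X k)%:R.

Definition supported_box {R : realType} (d0 : measure_display) (T : measurableType d0)
  (P : probability T R) (d : nat) (theta : 'I_d -> T -> R) (a : R) : Prop :=
  P [set t | forall k, 0 <= theta k t <= a]%classic = 1%E.

From mathcomp Require Import all_boot all_order all_algebra.
From mathcomp Require Import all_classical all_reals all_analysis.
From mathcomp Require Import ring lra measurable_realfun.
Import Order.TTheory GRing.Theory Num.Theory.
Local Open Scope ring_scope.
Local Open Scope classical_set_scope.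

Set Implicit Arguments.
Unset Strict Implicit.
Unset Printing Implicit Defensive.

(* Fix a threshold K_k for each coordinate and a tilt mu >= 0.  The elementary inequality
   (1 + m)^a <= (1 + K)^a (1 + e^{mu (m - K)}), valid when a <= mu (1 + K), bounds
   (1 + X_{k,max})^a by (1 + K_k)^a times a product over the n samples.  The expectation of
   that product factorises over samples and coordinates, and the Poisson moment generating
   function gives E[1 + e^{mu (X - K)}] <= 1 + e^{h (e^mu - 1) - mu K} when theta <= h.
   Choosing K_k with n e^{h (e^mu - 1) - mu K_k} <= 1 makes each coordinate contribute at most
   e (1 + K_k)^a.  For support [0, h] take mu = log L with L = log n / log log n and K_k of
   order L; for support [0, s log n] take mu = 1 and K_k of order log n. *)

Section NonnegativeSums.
Variable R : realType.
Local Open Scope ereal_scope.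

Lemma esumZl_le (T : choiceType) (c : \bar R) (a : T -> \bar R) :
  0 <= c -> (forall i, 0 <= a i) ->
  \esum_(i in [set: T]) (c * a i) <= c * \esum_(i in [set: T]) a i.
Proof.
move=> c0 a0; apply: ge_ereal_sup => _ [A [finA _] <-].
rewrite -ge0_mule_fsumr //; apply: lee_wpmul2l => //.
by apply: ereal_sup_ubound; exists A.
Qed.

Lemma lee_prod (I : Type) (r : seq I) (f g : I -> \bar R) :
  (forall i, 0 <= f i <= g i) -> \prod_(i <- r) f i <= \prod_(i <- r) g i.
Proof.
move=> fg; suff /andP[] : 0 <= \prod_(i <- r) f i <= \prod_(i <- r) g i by [].
elim/big_ind2: _ => [|x1 x2 y1 y2 /andP[x10 x12] /andP[y10 y12]|i _].
- by rewrite lee01 lexx.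
- by rewrite mule_ge0 ?lee_pmul.
- exact: fg.
Qed.

Definition ffun_cons {B : Type} {N : nat} (b : B) (Y : {ffun 'I_N -> B}) :
    {ffun 'I_N.+1 -> B} :=
  [ffun i => if unlift ord0 i is Some j then Y j else b].

Lemma esum_ffun_cons (B : choiceType) (N : nat) (F : {ffun 'I_N.+1 -> B} -> \bar R) :
  (forall X, 0 <= F X) ->
  \esum_(X in [set: {ffun 'I_N.+1 -> B}]) F X =
  \esum_(b in [set: B]) \esum_(Y in [set: {ffun 'I_N -> B}]) F (ffun_cons b Y).
Proof.
move=> F0; pose e (p : B * {ffun 'I_N -> B}) := ffun_cons p.1 p.2.
have eT : e @` [set: B * {ffun 'I_N -> B}] = [set: {ffun 'I_N.+1 -> B}].
  apply/seteqP; split => // X _; exists (X ord0, [ffun j => X (lift ord0 j)]) => //.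
  apply/ffunP => i; rewrite ffunE; case: unliftP => [j ->|->] //=.
  by rewrite ffunE.
have e_inj : set_inj [set: B * {ffun 'I_N -> B}] e.
  move=> [b Y] [b' Y'] _ _ /ffunP eYY'.
  have := eYY' ord0; rewrite !ffunE unlift_none /= => ->.
  congr pair; apply/ffunP => j; have := eYY' (lift ord0 j).
  by rewrite !ffunE liftK.
rewrite -eT esum_image //.
rewrite (@esum_esum R _ _ setT (fun=> setT) (fun b Y => F (ffun_cons b Y))) //.
by congr esum; apply/seteqP; split.
Qed.

Lemma esum_ffun_prod_le (B : choiceType) (N : nat) (f : 'I_N -> B -> \bar R) :
  (forall i b, 0 <= f i b) ->
  \esum_(X in [set: {ffun 'I_N -> B}]) \prod_(i < N) f i (X i)
   <= \prod_(i < N) \esum_(b in [set: B]) f i b.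
Proof.
elim: N f => [|N IH] f f0.
  rewrite big_ord0; under eq_esum do rewrite big_ord0.
  have -> : [set: {ffun 'I_0 -> B}] = [set ffun0 (card_ord 0)].
    by apply/seteqP; split => X _ //=; apply/ffunP => -[].
  by rewrite esum_set1.
have cons_prod b Y : \prod_(i < N.+1) f i (ffun_cons b Y i) =
    f ord0 b * \prod_(i < N) f (lift ord0 i) (Y i).
  rewrite big_ord_recl /ffun_cons ffunE unlift_none.
  by under eq_bigr do rewrite ffunE liftK.
set S := \prod_(i < N) \esum_(b in [set: B]) f (lift ord0 i) b.
have S0 : 0 <= S by apply: prode_ge0 => i _; exact: esum_ge0.
rewrite esum_ffun_cons; last by move=> X; exact: prode_ge0.
rewrite big_ord_recl -/S.
apply: le_trans (_ : \esum_(b in [set: B]) (f ord0 b * S) <= _).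
  apply: le_esum => b _; under eq_esum do rewrite cons_prod.
  apply: le_trans; first by apply: esumZl_le => // Y; exact: prode_ge0.
  by apply: lee_wpmul2l => //; exact: IH.
under eq_esum do rewrite muleC.
by rewrite muleC; exact: esumZl_le.
Qed.

End NonnegativeSums.

Section Poisson.
Variable R : realType.

Lemma poi_pmf_ge0 (th : R) (m : nat) : 0 <= th -> 0 <= poi_pmf th m.
Proof. by move=> th0; rewrite /poi_pmf !mulr_ge0 ?expR_ge0 ?exprn_ge0 ?invr_ge0. Qed.

Lemma esum_poi_pmf_exprn_le (th z : R) : 0 <= th -> 0 <= z ->
  (\esum_(m in [set: nat]) (poi_pmf th m * z ^+ m)%:E <= (expR (th * (z - 1)))%:E)%E.
Proof.
move=> th0 z0.
have term_ge0 m : (0 <= (poi_pmf th m * z ^+ m)%:E)%E.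
  by rewrite lee_fin mulr_ge0 ?poi_pmf_ge0 ?exprn_ge0.
have partial_exp_le N : series (exp_coeff (th * z)) N <= expR (th * z).
  apply: nondecreasing_cvgn_le; last exact: is_cvg_series_exp_coeff.
  by apply: nondecreasing_series => k _ _; rewrite exp_coeff_ge0 ?mulr_ge0.
rewrite -nneseries_esumT //; apply: lime_le.
  by apply: is_cvg_nneseries => m _ _.
apply: nearW => N; rewrite sumEFin lee_fin.
rewrite (_ : \sum_(0 <= m < N) _ = expR (- th) * series (exp_coeff (th * z)) N).
  by rewrite mulrBr mulr1 addrC expRD ler_wpM2l ?expR_ge0.
rewrite /series /= mulr_sumr; apply: eq_bigr => m _.
by rewrite /poi_pmf /exp_coeff /= exprMn; field.
Qed.

Definition tilt (mu : R) (K m : nat) : R := 1 + expR (mu * (m%:R - K%:R)).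

Lemma tilt_ge1 (mu : R) (K m : nat) : 1 <= tilt mu K m.
Proof. by rewrite lerDl expR_ge0. Qed.

Lemma esum_poi_pmf_tilt_le (th h mu : R) (K : nat) : 0 <= th <= h -> 0 <= mu ->
  (\esum_(m in [set: nat]) (poi_pmf th m * tilt mu K m)%:E
   <= (1 + expR (h * (expR mu - 1) - mu * K%:R))%:E)%E.
Proof.
move=> /andP[th0 thh] mu0.
have p0 m : 0 <= poi_pmf th m by exact: poi_pmf_ge0.
under eq_esum => m _ do rewrite /tilt mulrDr mulr1 EFinD.
rewrite esumD; first last.
- by move=> m _; rewrite lee_fin mulr_ge0 ?expR_ge0.
- by move=> m _; rewrite lee_fin.
rewrite EFinD; apply: leeD.
  apply: le_trans (_ : \esum_(m in [set: nat]) (poi_pmf th m * 1 ^+ m)%:E <= _)%E.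
    by apply: le_esum => m _; rewrite expr1n mulr1.
  by apply: le_trans (esum_poi_pmf_exprn_le th0 ler01) _; rewrite subrr mulr0 expR0.
apply: le_trans (_ : \esum_(m in [set: nat])
   ((expR (- (mu * K%:R)))%:E * (poi_pmf th m * expR mu ^+ m)%:E) <= _)%E.
  apply: le_esum => m _; rewrite -EFinM lee_fin mulrCA -expRM_natl -expRD.
  by have -> : mu * (m%:R - K%:R) = - (mu * K%:R) + m%:R * mu by ring.
apply: le_trans; first by apply: esumZl_le => [|m];
  rewrite lee_fin ?mulr_ge0 ?exprn_ge0 ?expR_ge0.
apply: le_trans (lee_wpmul2l _ (esum_poi_pmf_exprn_le th0 (expR_ge0 mu))) _.
  by rewrite lee_fin expR_ge0.
rewrite -EFinM lee_fin -expRD ler_expR addrC lerD2r ler_wpM2r // subr_ge0.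
by rewrite -expR0 ler_expR.
Qed.

End Poisson.

Section Mixture.
Variables (R : realType) (d0 : measure_display) (T : measurableType d0).
Variables (P : probability T R) (d : nat) (theta : 'I_d -> T -> R) (a : R).
Hypothesis theta_meas : forall k, measurable_fun setT (theta k).
Hypothesis theta_supp : supported_box P theta a.

Let box := [set t | forall k, 0 <= theta k t <= a].

Let measurable_box : measurable box.
Proof.
have -> : box = \bigcap_(k in [set: 'I_d]) (theta k @^-1` `[0, a]).
  apply/seteqP; split => t /= tk k; last by have := tk k I; rewrite /= in_itv.
  by move=> _; rewrite /= in_itv /= tk.
apply: fin_bigcap_measurable; first exact: finite_finset.
by move=> k _; rewrite -[X in measurable X]setTI; exact: theta_meas.
Qed.

Let measurable_poi_prod (x : {ffun 'I_d -> nat}) :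
  measurable_fun setT (fun t => \prod_(k < d) poi_pmf (theta k t) (x k)).
Proof.
apply: measurable_prod => k _; rewrite /poi_pmf.
apply: measurable_funM; last exact: measurable_cst.
apply: measurable_funM; last exact: measurable_funX.
exact/measurableT_comp/measurable_funN.
Qed.

Let p_mix_box (x : {ffun 'I_d -> nat}) :
  p_mix P theta x = (\int[P]_(t in box) (\prod_(k < d) poi_pmf (theta k t) (x k))%:E)%E.
Proof.
have box_null : P (~` box) = 0%E.
  by rewrite probability_setC // theta_supp subee.
rewrite /p_mix [RHS]integral_mkcond; apply: ae_eq_integral => //.
- exact/measurable_EFinP.
- apply/(measurable_restrictT _ _).1 => //.
  exact/measurable_EFinP/(measurable_funS _ _ (measurable_poi_prod x)).
- exists (~` box); split => //; first exact: measurableC.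
  by move=> t /= neq boxt; apply: neq => _; rewrite patchE ifT //; exact: mem_set.
Qed.

Let poi_prod_ge0 (x : {ffun 'I_d -> nat}) t :
  box t -> 0 <= \prod_(k < d) poi_pmf (theta k t) (x k).
Proof. by move=> boxt; apply: prodr_ge0 => k _; case/andP: (boxt k) => /poi_pmf_ge0. Qed.

Lemma p_mix_ge0 (x : {ffun 'I_d -> nat}) : (0 <= p_mix P theta x)%E.
Proof. by rewrite p_mix_box; apply: integral_ge0 => t /poi_prod_ge0; rewrite lee_fin. Qed.

Lemma esum_p_mix_prod_le (psi : 'I_d -> nat -> R) (Q : 'I_d -> R) :
  (forall k m, 0 <= psi k m) -> (forall k, 0 <= Q k) ->
  (forall k th, 0 <= th <= a ->
     (\esum_(m in [set: nat]) (poi_pmf th m * psi k m)%:E <= (Q k)%:E)%E) ->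
  (\esum_(x in [set: {ffun 'I_d -> nat}])
      (p_mix P theta x * (\prod_(k < d) psi k (x k))%:E)
   <= (\prod_(k < d) Q k)%:E)%E.
Proof.
move=> psi0 Q0 psiQ.
pose g (x : {ffun 'I_d -> nat}) t :=
  (\prod_(k < d) poi_pmf (theta k t) (x k) * \prod_(k < d) psi k (x k))%:E.
have g0 x t : box t -> (0 <= g x t)%E.
  by move=> boxt; rewrite /g lee_fin; apply: mulr_ge0; [exact: poi_prod_ge0|exact: prodr_ge0].
have g_meas x : measurable_fun box (g x).
  apply/measurable_EFinP/measurable_funM; last exact: measurable_cst.
  exact: measurable_funS (measurable_poi_prod x).
have p_mix_g x : (p_mix P theta x * (\prod_(k < d) psi k (x k))%:E =
    \int[P]_(t in box) g x t)%E.
  rewrite p_mix_box -ge0_integralZr //.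
  - exact/measurable_EFinP/(measurable_funS _ _ (measurable_poi_prod x)).
  - by move=> t /poi_prod_ge0; rewrite lee_fin.
  - by rewrite lee_fin prodr_ge0.
have sum_g_le t : box t ->
    (\esum_(x in [set: {ffun 'I_d -> nat}]) g x t <= (\prod_(k < d) Q k)%:E)%E.
  move=> boxt; under eq_esum => x _ do rewrite /g -big_split /= -prodEFin.
  apply: le_trans (@esum_ffun_prod_le R nat d
    (fun k m => (poi_pmf (theta k t) m * psi k m)%:E) _) _.
    by move=> k m; rewrite lee_fin mulr_ge0 // poi_pmf_ge0 //; case/andP: (boxt k).
  rewrite -prodEFin; apply: lee_prod => k; rewrite esum_ge0 ?psiQ //.
  by move=> m _; rewrite lee_fin mulr_ge0 // poi_pmf_ge0 //; case/andP: (boxt k).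
apply: ge_ereal_sup => _ [A [finA _] <-]; rewrite fsbig_finite //=.
under eq_bigr => x _ do rewrite p_mix_g.
apply: le_trans (_ : \int[P]_(t in box) (\prod_(k < d) Q k)%:E <= _)%E.
  rewrite -(@ge0_integral_sum _ _ _ P box measurable_box _ g g_meas g0).
  apply: (@ge0_le_integral _ _ _ P box measurable_box).
  - by move=> t boxt; apply: sume_ge0 => x _; exact: g0.
  - exact: emeasurable_sum.
  - exact: measurable_cst.
  move=> t boxt; apply: le_trans (sum_g_le t boxt).
  by apply: ereal_sup_ubound; exists A => //; rewrite fsbig_finite.
rewrite integral_cst // -[leRHS]mule1 lee_wpmul2l ?probability_le1 //.
by rewrite lee_fin prodr_ge0.
Qed.

End Mixture.

Section Tilting.
Variable R : realType.

Lemma exprn_le_tilt (a K m : nat) (mu : R) : 0 <= mu -> a%:R <= mu * (1 + K)%:R ->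
  (1 + m)%:R ^+ a <= (1 + K)%:R ^+ a * tilt mu K m.
Proof.
move=> mu0 a_le.
have K1 : 0 < (1 + K)%:R :> R by rewrite ltr0n.
have [mK|Km] := leqP m K.
  rewrite -[leLHS]mulr1 ler_pM ?exprn_ge0 ?tilt_ge1 //.
  by apply: lerXn2r; rewrite ?nnegrE ?ler0n ?ler_nat ?leq_add2l.
pose y : R := (m%:R - K%:R) / (1 + K)%:R.
have y0 : 0 <= y by rewrite divr_ge0 ?subr_ge0 ?ler_nat ?(ltnW Km) ?ltW.
have m_le : (1 + m)%:R <= (1 + K)%:R * expR y.
  apply: le_trans (_ : (1 + K)%:R * (1 + y) <= _); last first.
    by rewrite ler_wpM2l ?expR_ge1Dx ?ltW.
  by rewrite mulrDr mulr1 mulrCA divff ?gt_eqF // mulr1 !natrD; lra.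
apply: le_trans (_ : ((1 + K)%:R * expR y) ^+ a <= _).
  by apply: lerXn2r; rewrite ?nnegrE ?ler0n ?mulr_ge0 ?expR_ge0.
rewrite exprMn ler_wpM2l ?exprn_ge0 ?ler0n // -expRM_natl.
apply: (@le_trans _ _ (expR (mu * (m%:R - K%:R)))); last by rewrite /tilt lerDr.
by rewrite ler_expR /y mulrA mulrAC ler_pM2r ?subr_gt0 ?ltr_nat // ler_pdivrMr.
Qed.

Lemma exprn_max_le_tilt (n a K : nat) (x : 'I_n -> nat) (mu : R) :
  0 <= mu -> a%:R <= mu * (1 + K)%:R ->
  (1 + \max_(i < n) x i)%:R ^+ a <= (1 + K)%:R ^+ a * \prod_(i < n) tilt mu K (x i).
Proof.
move=> mu0 a_le.
have prod_ge1 (r : seq 'I_n) (P : pred 'I_n) : 1 <= \prod_(i <- r | P i) tilt mu K (x i).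
  by elim/big_ind: _ => // [u v|i _]; [exact: mulr_ege1|exact: tilt_ge1].
have K1 : 1 <= (1 + K)%:R ^+ a :> R by rewrite exprn_ege1 // ler1n.
elim/big_ind: _ => [|u v|i _].
- rewrite addn0 expr1n; apply: le_trans K1 _.
  by rewrite -[leLHS]mulr1 ler_wpM2l ?prod_ge1 // (le_trans ler01).
- by rewrite /maxn; case: ifP.
apply: le_trans (exprn_le_tilt (x i) mu0 a_le) _.
rewrite ler_wpM2l ?(le_trans ler01) // (bigD1 i) //= -[leLHS]mulr1.
by rewrite ler_wpM2l ?prod_ge1 // (le_trans ler01) ?tilt_ge1.
Qed.

Definition moment_exponent (d : nat) (j : 'I_d) (beta : nat) (k : 'I_d) : nat :=
  if k == j then beta else 1%N.

Lemma moment_statE (n d : nat) (j : 'I_d) (beta : nat) (X : {ffun 'I_n -> {ffun 'I_d -> nat}}) :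
  moment_stat j beta X = \prod_(k < d) (1 + xmax X k)%:R ^+ moment_exponent j beta k :> R.
Proof.
rewrite /moment_stat [RHS](bigD1 j) //= /moment_exponent eqxx; congr (_ * _).
by apply: eq_bigr => k /negPf ->; rewrite expr1.
Qed.

Lemma moment_stat_le_tilt (n d : nat) (j : 'I_d) (beta : nat) (mu : R) (K : 'I_d -> nat)
    (X : {ffun 'I_n -> {ffun 'I_d -> nat}}) :
  0 <= mu -> (forall k, (moment_exponent j beta k)%:R <= mu * (1 + K k)%:R) ->
  moment_stat j beta X <=
  \prod_(k < d) (1 + K k)%:R ^+ moment_exponent j beta k *
  \prod_(i < n) \prod_(k < d) tilt mu (K k) (X i k).
Proof.
move=> mu0 a_le; rewrite moment_statE exchange_big -big_split /=.
by apply: ler_prod => k _; rewrite exprn_ge0 //=; exact: exprn_max_le_tilt.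
Qed.

End Tilting.

Section MomentBound.
Variable R : realType.

Lemma exprn_1D_le_expR1 (n : nat) (x : R) : 0 <= x -> n%:R * x <= 1 ->
  (1 + x) ^+ n <= expR 1.
Proof.
move=> x0 nx1; apply: le_trans (_ : expR x ^+ n <= _).
  by apply: lerXn2r; rewrite ?nnegrE ?addr_ge0 ?expR_ge0 // expR_ge1Dx.
by rewrite -expRM_natl ler_expR.
Qed.

Lemma mix_expect_moment_le_tilt (d0 : measure_display) (T : measurableType d0)
    (P : probability T R) (d n : nat) (theta : 'I_d -> T -> R) (j : 'I_d)
    (beta : nat) (h mu : R) (K : 'I_d -> nat) :
  (forall k, measurable_fun setT (theta k)) -> supported_box P theta h -> 0 <= mu ->
  (forall k, (moment_exponent j beta k)%:R <= mu * (1 + K k)%:R) ->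
  (forall k, n%:R * expR (h * (expR mu - 1) - mu * (K k)%:R) <= 1) ->
  (mix_expect P theta (@moment_stat R n d j beta)
    <= (\prod_(k < d) (expR 1 * (1 + K k)%:R ^+ moment_exponent j beta k))%:E)%E.
Proof.
move=> theta_meas theta_supp mu0 a_le n_delta.
pose G : R := \prod_(k < d) (1 + K k)%:R ^+ moment_exponent j beta k.
pose delta k := expR (h * (expR mu - 1) - mu * (K k)%:R).
pose phi (x : {ffun 'I_d -> nat}) := \prod_(k < d) tilt mu (K k) (x k).
have G0 : 0 <= G by rewrite prodr_ge0 // => k _; rewrite exprn_ge0.
have term0 x : (0 <= p_mix P theta x * (phi x)%:E)%E.
  rewrite mule_ge0 ?(p_mix_ge0 theta_meas theta_supp) // lee_fin.
  by rewrite prodr_ge0 // => k _; rewrite (le_trans ler01) ?tilt_ge1.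
have sample_le : (\esum_(x in [set: {ffun 'I_d -> nat}]) (p_mix P theta x * (phi x)%:E)
    <= (\prod_(k < d) (1 + delta k))%:E)%E.
  apply: (esum_p_mix_prod_le theta_meas theta_supp
    (psi := fun k => tilt mu (K k)) (Q := fun k => 1 + delta k)).
  - by move=> k m; rewrite (le_trans ler01) ?tilt_ge1.
  - by move=> k; rewrite addr_ge0 ?expR_ge0.
  - by move=> k th thh; exact: esum_poi_pmf_tilt_le.
have stat_le (X : {ffun 'I_n -> {ffun 'I_d -> nat}}) :
    (\prod_(i < n) p_mix P theta (X i) * (@moment_stat R n d j beta X)%:E
    <= G%:E * \prod_(i < n) (p_mix P theta (X i) * (phi (X i))%:E))%E.
  rewrite big_split /= prodEFin muleCA -EFinM lee_wpmul2l ?prode_ge0 ?lee_fin //.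
  - by move=> i _; exact: (p_mix_ge0 theta_meas theta_supp (X i)).
  - exact: moment_stat_le_tilt.
rewrite /mix_expect.
apply: (@le_trans _ _ (G%:E * \prod_(i < n) (\prod_(k < d) (1 + delta k))%:E)%E); last first.
  rewrite prodEFin -EFinM lee_fin prodr_const card_ord -prodrXl -big_split /=.
  apply: ler_prod => k _; rewrite mulr_ge0 ?exprn_ge0 ?addr_ge0 ?expR_ge0 //= mulrC.
  by rewrite ler_pM2r ?exprn_gt0 ?ltr0n // exprn_1D_le_expR1 ?expR_ge0 ?n_delta.
apply: (@le_trans _ _ (G%:E * \esum_(X in [set: {ffun 'I_n -> {ffun 'I_d -> nat}}])
    \prod_(i < n) (p_mix P theta (X i) * (phi (X i))%:E))%E).
  apply: le_trans (esumZl_le _ _); last 2 first.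
  - by rewrite lee_fin.
  - by move=> X; rewrite prode_ge0.
  by apply: le_esum => X _; exact: stat_le.
rewrite lee_wpmul2l ?lee_fin //.
apply: le_trans (@esum_ffun_prod_le R {ffun 'I_d -> nat} n
  (fun _ x => p_mix P theta x * (phi x)%:E)%E _) _ => //.
by apply: lee_prod => i; rewrite esum_ge0.
Qed.

End MomentBound.

Section Thresholds.
Variable R : realType.

Lemma expR1_ge2 : 2 <= expR 1 :> R.
Proof. by have := expR_ge1Dx (1 : R); rewrite (_ : 1 + 1 = 2). Qed.

Lemma expR1_lt3 : expR 1 < 3 :> R.
Proof.
have e8_gt0 : 0 < expR (8^-1) :> R by exact: expR_gt0.
have e8_le : expR (8^-1) <= 8 / 7 :> R.
  have : 7 / 8 <= expR (- 8^-1) :> R by apply: le_trans (expR_ge1Dx _); lra.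
  rewrite expRN => e8_ge.
  have : expR (8^-1) * (7 / 8) <= 1 :> R.
    apply: le_trans (_ : expR (8^-1) * (expR (8^-1))^-1 <= 1).
      by apply: ler_wpM2l => //; exact: ltW.
    by rewrite divff // gt_eqF.
  lra.
have -> : expR 1 = expR (8^-1) ^+ 8 :> R by rewrite -expRM_natl divff.
apply: le_lt_trans (_ : (8 / 7) ^+ 8 < 3).
  by apply: lerXn2r; rewrite ?nnegrE ?expR_ge0 ?divr_ge0.
by rewrite expr_div_n ltr_pdivrMr ?exprn_gt0 // !(exprS, expr0, mulr1); lra.
Qed.

Lemma ln_le_div_expR1 (x : R) : 0 < x -> ln x <= x / expR 1.
Proof.
move=> x0; have xe0 : 0 < x / expR 1 by rewrite divr_gt0 ?expR_gt0.
have := @le_ln1Dx R (x / expR 1 - 1) ltac:(lra).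
by rewrite addrC subrK ln_div ?posrE ?expR_gt0 // expRK; lra.
Qed.

Lemma ln_nat_gt1 (n : nat) : (3 <= n)%N -> 1 < ln n%:R :> R.
Proof.
move=> n3; rewrite -[ltLHS](expRK 1) ltr_ln ?posrE ?expR_gt0 ?ltr0n ?(leq_trans _ n3) //.
by apply: lt_le_trans expR1_lt3 _; rewrite (ler_nat R 3 n).
Qed.

Lemma mulr_expR_le1 (x E : R) : 0 < x -> E <= - ln x -> x * expR E <= 1.
Proof.
move=> x0 E_le; apply: le_trans (_ : x * expR (- ln x) <= _).
  by apply: ler_wpM2l; [exact: ltW | rewrite ler_expR].
by rewrite expRN lnK ?posrE // divff // gt_eqF.
Qed.

Lemma div_ln_ge_expR1 (x : R) : 1 < x -> expR 1 <= x / ln x.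
Proof.
move=> x1; have lnx0 : 0 < ln x by rewrite ln_gt0.
by rewrite ler_pdivlMr // mulrC -ler_pdivlMr ?expR_gt0 // ln_le_div_expR1 // (lt_trans ltr01).
Qed.

(* With [L = x / ln x], [ln L = ln x - ln (ln x) >= ln x / 2], hence [x = L ln x <= 2 L ln L]. *)
Lemma le_div_ln_mul_ln (x : R) : 1 < x -> x <= 2 * (x / ln x * ln (x / ln x)).
Proof.
move=> x1; have x0 : 0 < x by rewrite (lt_trans ltr01).
have lnx0 : 0 < ln x by rewrite ln_gt0.
have lnlnx : ln (ln x) <= ln x / 2.
  apply: le_trans (ln_le_div_expR1 lnx0) _; apply: ler_wpM2l; first exact: ltW.
  by rewrite lef_pV2 ?posrE ?expR_gt0 // expR1_ge2.
have xE : x = x / ln x * ln x by rewrite divfK ?gt_eqF.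
by rewrite ln_div ?posrE // {1}xE mulrCA ler_pM2l ?divr_gt0 //; lra.
Qed.

Lemma bounded_support_exponent_le (x L h A : R) : expR 1 <= L -> x <= 2 * (L * ln L) ->
  0 < h -> 6 <= A -> 2 * h <= A ->
  h * (expR (ln L) - 1) - ln L * (A * L - 1) <= - x.
Proof.
move=> Le xL h0 A6 hA.
have L0 : 0 < L by apply: lt_le_trans Le; exact: expR_gt0.
have L1 : 1 <= L by apply: le_trans Le; rewrite -expR0 ler_expR.
have lnL1 : 1 <= ln L by rewrite -(expRK 1) ler_ln ?posrE ?expR_gt0.
rewrite lnK ?posrE //; set u := ln L in lnL1 xL *.
have hL : h * L <= A / 2 * L by rewrite ler_pM2r //; lra.
have Lu : A / 2 * L <= A / 2 * L * u by rewrite ler_peMr // mulr_ge0 //; lra.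
have ALu : 6 * (L * u) <= A * (L * u).
  by rewrite ler_pM2r ?mulr_gt0 //; lra.
have uLu : u <= L * u by rewrite ler_peMl //; lra.
nra.
Qed.

Lemma log_support_exponent_le (x s A : R) : 1 <= x -> 0 < s -> 4 <= A -> 2 * expR 1 * s <= A ->
  s * x * (expR 1 - 1) - 1 * (A * x - 1) <= - x.
Proof.
move=> x1 s0 A4 sA; have e0 : 0 < expR 1 :> R by exact: expR_gt0.
have sxA : 2 * expR 1 * s * x <= A * x by apply: ler_wpM2r; lra.
have Ax : 4 * x <= A * x by apply: ler_wpM2r; lra.
have : 0 <= s * x by rewrite mulr_ge0 //; lra.
nra.
Qed.

End Thresholds.

Section ThresholdChoice.
Variable R : realType.

Lemma prod_threshold_le (d : nat) (j : 'I_d) (beta : nat) (B : R) (K : 'I_d -> nat) :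
  1 <= B -> (forall k, (K k)%:R <= B + (moment_exponent j beta k)%:R) ->
  \prod_(k < d) (expR 1 * (1 + K k)%:R ^+ moment_exponent j beta k)
  <= expR 1 * (2 + beta%:R) ^+ beta * (3 * expR 1 * B) ^+ (d - 1 + beta).
Proof.
move=> B1 K_le; have e2 := @expR1_ge2 R; set C := 3 * expR 1 * B.
have BC : B <= C by rewrite /C ler_peMl //; lra.
have b0 : 0 <= beta%:R :> R by exact: ler0n.
have K0 k : 0 <= (1 + K k)%:R :> R by exact: ler0n.
have j_le : expR 1 * (1 + K j)%:R ^+ beta <= expR 1 * (2 + beta%:R) ^+ beta * C ^+ beta.
  rewrite -mulrA -exprMn; apply: ler_wpM2l; first by lra.
  apply: lerXn2r; rewrite ?nnegrE ?mulr_ge0 //; try lra.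
  have := K_le j; rewrite /moment_exponent eqxx natrD mulr1n => Kj.
  have : (2 + beta%:R) * B <= (2 + beta%:R) * C by apply: ler_wpM2l => //; lra.
  have : 0 <= beta%:R * (B - 1) by rewrite mulr_ge0 //; lra.
  nra.
have others_le : \prod_(k < d | k != j) (expR 1 * (1 + K k)%:R ^+ moment_exponent j beta k)
    <= C ^+ (d - 1).
  rewrite subn1 -[d in C ^+ d.-1]card_ord -(cardC1 j) -prodr_const.
  rewrite [X in _ <= X](eq_bigl (fun k => k != j)) => [|k]; last by rewrite !inE.
  apply: ler_prod => k kj; rewrite mulr_ge0 ?exprn_ge0 //=.
  have := K_le k; rewrite /moment_exponent (negPf kj) expr1 natrD mulr1n => Kk.
  rewrite /C [3 * _]mulrC -mulrA; apply: ler_wpM2l; lra.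
rewrite (bigD1 j) //= {1}/moment_exponent eqxx (addnC (d - 1)%N) exprD mulrA.
apply: ler_pM => //.
by rewrite prodr_ge0 // => k _; rewrite mulr_ge0 ?exprn_ge0 ?expR_ge0.
Qed.

Lemma mix_expect_moment_le (d0 : measure_display) (T : measurableType d0)
    (P : probability T R) (d n : nat) (theta : 'I_d -> T -> R) (j : 'I_d)
    (beta : nat) (h mu B : R) :
  (forall k, measurable_fun setT (theta k)) -> supported_box P theta h ->
  1 <= mu -> 1 <= B -> n%:R * expR (h * (expR mu - 1) - mu * (B - 1)) <= 1 ->
  (mix_expect P theta (@moment_stat R n d j beta)
    <= (expR 1 * (2 + beta%:R) ^+ beta * (3 * expR 1 * B) ^+ (d - 1 + beta))%:E)%E.
Proof.
move=> theta_meas theta_supp mu1 B1 n_le.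
(* Adding the exponent to the threshold gives [a_k <= mu (1 + K_k)] whatever the size of [B]. *)
pose K k := (Num.truncn B + moment_exponent j beta k)%N.
have mu0 : 0 <= mu by apply: le_trans mu1.
apply: le_trans (mix_expect_moment_le_tilt (K := K) theta_meas theta_supp mu0 _ _) _.
- move=> k; apply: le_trans (_ : (1 + K k)%:R <= _).
    by rewrite ler_nat /K addnA leq_addl.
  by rewrite ler_peMl ?ler0n.
- move=> k; apply: le_trans n_le; apply: ler_wpM2l; first exact: ler0n.
  rewrite ler_expR lerD2l lerN2; apply: ler_wpM2l => //.
  have : (Num.truncn B)%:R <= (K k)%:R :> R by rewrite ler_nat leq_addr.
  by have := Num.Theory.truncnS_gt B; rewrite -natr1; lra.
rewrite lee_fin; apply: prod_threshold_le => // k.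
by rewrite /K natrD lerD2r Num.Theory.truncn_le; apply: le_trans B1.
Qed.

End ThresholdChoice.

Theorem lemma8 (R : realType) :
  exists c : nat -> R, (forall beta, 0 < c beta) /\
  exists c1 c2 c3 c4 : R, 0 < c1 /\ 0 < c2 /\ 0 < c3 /\ 0 < c4 /\
  forall (d n : nat) (j : 'I_d) (beta : nat) (h s : R),
    (1 <= d)%N -> (3 <= n)%N -> 0 < h -> 0 < s ->
  forall (d0 : measure_display) (T : measurableType d0) (P : probability T R)
         (theta : 'I_d -> T -> R),
    (forall k, measurable_fun setT (theta k)) ->
    (supported_box P theta h ->
       (mix_expect P theta (@moment_stat R n d j beta)
        <= (c beta * (Num.max c1 (c2 * h) * (ln n%:R / ln (ln n%:R))) ^+ (d - 1 + beta))%:E)%E)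
    /\
    (supported_box P theta (s * ln n%:R) ->
       (mix_expect P theta (@moment_stat R n d j beta)
        <= (c beta * (Num.max c3 (c4 * s) * ln n%:R) ^+ (d - 1 + beta))%:E)%E).
Proof.
have e0 : 0 < expR 1 :> R := expR_gt0 1.
set C : R := 3 * expR 1; have C0 : 0 < C by rewrite mulr_gt0.
exists (fun beta => expR 1 * (2 + beta%:R) ^+ beta); split.
  by move=> beta; rewrite mulr_gt0 // exprn_gt0 // ltr_wpDr.
exists (C * 6), (C * 2), (C * 4), (C * (2 * expR 1)).
do 4?split; rewrite ?mulr_gt0 //.
move=> d n j beta h s _ n3 h0 s0 d0 T P theta theta_meas.
have x1 : 1 < ln n%:R :> R by exact: ln_nat_gt1.
have n0 : 0 < n%:R :> R by rewrite ltr0n (leq_trans _ n3).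
split=> theta_supp.
- set L := ln n%:R / ln (ln n%:R).
  have Le : expR 1 <= L := div_ln_ge_expR1 x1.
  have L1 : 1 <= L by apply: le_trans Le; have := @expR1_ge2 R; lra.
  have lnL1 : 1 <= ln L by rewrite -(expRK 1) ler_ln ?posrE ?(lt_le_trans e0).
  set A := Num.max 6 (2 * h).
  have A6 : 6 <= A by rewrite le_max lexx.
  have hA : 2 * h <= A by rewrite le_max lexx orbT.
  have AL1 : 1 <= A * L by rewrite mulr_ege1 //; lra.
  rewrite -[C * 2 * h]mulrA -maxr_pMr ?(ltW C0) // -[C * _ * L]mulrA.
  apply: mix_expect_moment_le theta_meas theta_supp lnL1 AL1 _.
  exact: mulr_expR_le1 n0 (bounded_support_exponent_le Le (le_div_ln_mul_ln x1) h0 A6 hA).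
- set A := Num.max 4 (2 * expR 1 * s).
  have A4 : 4 <= A by rewrite le_max lexx.
  have sA : 2 * expR 1 * s <= A by rewrite le_max lexx orbT.
  have Ax1 : 1 <= A * ln n%:R by rewrite mulr_ege1 //; lra.
  rewrite -[C * _ * s]mulrA -maxr_pMr ?(ltW C0) // -[C * _ * ln _]mulrA.
  apply: mix_expect_moment_le theta_meas theta_supp (lexx 1) Ax1 _.
  exact: mulr_expR_le1 n0 (log_support_exponent_le (ltW x1) s0 A4 sA).
Qed.
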